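(* Let $\Lambda$ be a finite set of sites with a real symmetric hopping matrix $(t_{x,y})$. If the whole lattice $\Lambda$ is connected by exchange bonds (i.e. the graph on $\Lambda$ whose edges are the exchange bonds is connected), then the Hubbard model with $U=\infty$ and $N_e=|\Lambda|-1$ satisfies the connectivity condition.
   Context: A loop of length $m$ is an ordered set $(x_1,\ldots,x_m)$ of distinct sites with $t_{x_i,x_{i+1}}\ne0$ for $i=1,\ldots,m-1$ and $t_{x_m,x_1}\ne0$. A pair $\{x,y\}$ of distinct sites is an exchange bond if $x$ and $y$ both belong to a common loop of length three or four, and the set $\Lambda\setminus\{x,y\}$ remains connected via nonvanishing $t_{u,v}$ (i.e. the graph on $\Lambda\setminus\{x,y\}$ with edges $\{u,v\}$, $t_{u,v}\ne0$, is connected). Connectivity condition: with $N_e=|\Lambda|-1$, a configuration is a pair $(x,\boldsymbol\sigma)$ with $x\in\Lambda$ (the empty site, ''hole'') and $\boldsymbol\sigma\in\{\uparrow,\downarrow\}^{\Lambda\setminus\{x\}}$ (each other site singly occupied with spin $\sigma_y$). Two configurations are adjacent if one is obtained from the other by moving the electron at a site $z\ne x$ with $t_{x,z}\ne0$ onto the hole $x$ (keeping its spin), $z$ becoming the new hole. The connectivity condition holds if for each fixed value of $\sum_{y\ne x}\sigma_y$ (with $\uparrow=+\frac12,\downarrow=-\frac12$) the graph of configurations with that value and this adjacency is connected. *)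

From HB Require Import structures.
From mathcomp Require Import all_boot all_order all_algebra.
From mathcomp Require Import reals.
From Stdlib Require Import Relations.
Set Implicit Arguments. Unset Strict Implicit. Unset Printing Implicit Defensive.
Import Order.TTheory GRing.Theory Num.Theory.
Local Open Scope ring_scope.

Section Hubbard.
Variables (R : realType) (T : finType) (t : T -> T -> R).

Definition hop (u v : T) : bool := t u v != 0.

Definition is_loop (s : seq T) : bool := uniq s && cycle hop s.

Definition hop_connected_on (S : {set T}) : Prop :=
  forall u v, u \in S -> v \in S ->
    connect (fun a b => [&& a \in S, b \in S & hop a b]) u v.

Definition common_short_loop (x y : T) : bool :=
  [exists s : 3.-tuple T, [&& is_loop s, x \in s & y \in s]] ||
  [exists s : 4.-tuple T, [&& is_loop s, x \in s & y \in s]].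

Definition exchange_bond (x y : T) : Prop :=
  [/\ x != y, common_short_loop x y & hop_connected_on (~: [set x; y])].

Definition lattice_connected_by_exchange_bonds : Prop :=
  forall u v : T, clos_refl_trans T exchange_bond u v.

(* configurations with N_e = |Lambda| - 1: each site is empty (None) or singly
   occupied with spin Some true (up) / Some false (down); exactly one hole. *)
Definition config := {ffun T -> option bool}.

Definition valid_config (c : config) : bool := #|[set y | c y == None]| == 1.

Definition spin_val (o : option bool) : rat :=
  match o with Some true => 1/2 | Some false => -(1/2) | None => 0 end.

Definition total_spin (c : config) : rat :=
  \sum_(y | c y != None) spin_val (c y).

Definition hop_move (c c' : config) : bool :=
  [exists x, exists z, [&& c x == None, z != x, hop x z &
     c' == [ffun y => if y == x then c z else if y == z then None else c y]]].

Definition config_adj (c c' : config) : bool := hop_move c c' || hop_move c' c.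

Definition connectivity_condition : Prop :=
  forall (S : rat) (c c' : config),
    valid_config c -> valid_config c' -> total_spin c = S -> total_spin c' = S ->
    connect (fun a b => [&& valid_config a, valid_config b, total_spin a == S,
                            total_spin b == S & config_adj a b]) c c'.

End Hubbard.

From HB Require Import structures.
From mathcomp Require Import all_boot all_order all_algebra.
From mathcomp Require Import fingroup perm.
From mathcomp Require Import reals.
From mathcomp Require Import lra.
Set Implicit Arguments. Unset Strict Implicit. Unset Printing Implicit Defensive.
Import Order.TTheory GRing.Theory Num.Theory.
Local Open Scope ring_scope.

(* Two configurations of the same spin sector contain the same numbers of holes, up and
   down spins, so each is a relabelling of the other by a permutation of sites.  It thus
   suffices that the relabelling by every transposition can be realised by hops inside the
   sector, and by conjugation along the connected graph of exchange bonds it suffices to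
   do so for the bonds themselves.  For a bond {x, y}, carry the hole through the lattice
   minus {x, y}, which is connected and on which hops commute with exchanging x and y, to
   the third site u of a short loop through x and y.  Running the hole once around the
   loop exchanges x and y if the loop is a triangle, and cyclically permutes its three
   occupied sites if it is a square; as there are only two spin values, one of the two
   3-cycles has the same effect as the exchange.  A hole sitting on x (or y) is first
   moved onto the loop and the exchange is completed by one more hop. *)

Section Relabelling.
Variable T : finType.
Implicit Types (c : config T) (s : {perm T}).

Definition permc c s : config T := [ffun z => c (s z)].

Lemma permcM c s u : permc (permc c s) u = permc c (u * s)%g.
Proof. by apply/ffunP => z; rewrite !ffunE permM. Qed.

Lemma permc1 c : permc c 1%g = c.
Proof. by apply/ffunP => z; rewrite ffunE perm1. Qed.

Definition nsites c (a : option bool) : nat := #|[set y | c y == a]|.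

Lemma nsites_permc c s a : nsites (permc c s) a = nsites c a.
Proof.
rewrite /nsites -(card_preimset [set y | c y == a] (@perm_inj _ s)).
by apply: eq_card => z; rewrite !inE ffunE.
Qed.

Lemma nsites_sum c a : nsites c a = (\sum_y (c y == a))%N.
Proof. by rewrite /nsites -sum1_card big_mkcond; apply: eq_bigr => y _; rewrite inE. Qed.

Lemma nsites_total c :
  (nsites c None + nsites c (Some true) + nsites c (Some false))%N = #|T|.
Proof.
rewrite !nsites_sum -!big_split -sum1_card.
by apply: eq_bigr => y _; case: (c y) => [[]|].
Qed.

Lemma total_spin_nsites c :
  total_spin c = (nsites c (Some true))%:R / 2 - (nsites c (Some false))%:R / 2.
Proof.
rewrite /total_spin big_mkcond !nsites_sum !natr_sum !mulr_suml -sumrB.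
by apply: eq_bigr => y _; case: (c y) => [[]|] /=; rewrite ?mul0r ?mul1r ?subr0 ?sub0r ?subrr.
Qed.

Lemma valid_config_permc c s : valid_config (permc c s) = valid_config c.
Proof. by have := nsites_permc c s None; rewrite /nsites /valid_config => ->. Qed.

Lemma total_spin_permc c s : total_spin (permc c s) = total_spin c.
Proof. by rewrite !total_spin_nsites !nsites_permc. Qed.

Lemma nsites_eq_of_spin c c' : valid_config c -> valid_config c' ->
  total_spin c = total_spin c' -> nsites c =1 nsites c'.
Proof.
move=> /eqP vc /eqP vc' spin_eq.
have := nsites_total c; have := nsites_total c'.
rewrite -/(nsites c None) -/(nsites c' None) in vc vc'.
rewrite vc vc' => tot' tot.
move: spin_eq; rewrite !total_spin_nsites => spin_eq.
have up : nsites c (Some true) = nsites c' (Some true).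
  apply/eqP; rewrite -(eqr_nat rat) eq_sym; apply/eqP.
  have : (nsites c (Some true))%:R + (nsites c (Some false))%:R =
         (nsites c' (Some true))%:R + (nsites c' (Some false))%:R :> rat.
    by rewrite -!natrD; congr _%:R; apply/eqP; rewrite -(eqn_add2l 1) !addnA tot tot'.
  lra.
case=> [[]|]; [exact: up | | by rewrite vc vc'].
by apply/eqP; rewrite -(eqn_add2l (1 + nsites c (Some true))) tot up tot'.
Qed.

Lemma permc_of_nsites_eq c c' : nsites c =1 nsites c' -> exists s, c' = permc c s.
Proof.
have [n] := ubnP #|[set y | c y != c' y]|; elim: n c => // n IH c /ltnSE le_n eq_n.
have [x /= cx | c_eq] := pickP (fun y => c y != c' y); last first.
  by exists 1%g; rewrite permc1; apply/ffunP => y; apply/esym/eqP/negbFE/c_eq.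
have : ~~ ([set y | c y == c' x] \subset [set y | c' y == c' x]).
  apply: contra cx => /(subset_cardP (eq_n (c' x))) eq_level.
  have : x \in [set y | c' y == c' x] by rewrite inE.
  by rewrite -eq_level inE.
case/subsetPn => y; rewrite !inE => /eqP cy c'y.
have [s ->] : exists s, c' = permc (permc c (tperm x y)) s.
  apply: IH => [|a]; last by rewrite nsites_permc eq_n.
  suff sub : [set z | permc c (tperm x y) z != c' z] \subset [set z | c z != c' z] :\ x.
    by apply: leq_ltn_trans (subset_leq_card sub) _; rewrite (cardsD1 x) inE cx in le_n.
  apply/subsetP => z; rewrite !inE ffunE.
  case: tpermP => [->|->|/eqP zx /eqP zy]; first by rewrite cy eqxx.
    by move=> _; rewrite cy [c' x == _]eq_sym c'y andbT; apply: contraNneq c'y => ->.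
  by rewrite zx.
by exists (s * tperm x y)%g; rewrite permcM.
Qed.

End Relabelling.

Ltac config_ext :=
  let z := fresh "z" in
  apply/ffunP => z; rewrite !ffunE;
  repeat first [ case: tpermP => [?|?|? ?]; subst
               | case: ifP => [/eqP ?|?]; subst ];
  repeat match goal with H : ?f ?v = _ |- context [?f ?v] => rewrite H end;
  try done;
  match goal with
  | H : (?a == ?a) = false |- _ => by rewrite eqxx in H
  | H : ?a <> ?a |- _ => by case: H
  | H : is_true (?a != ?a) |- _ => by rewrite eqxx in H
  end.

Ltac distinct_sites :=
  rewrite /= ?inE ?negb_or; repeat (apply/andP; split); try done; by rewrite eq_sym.

Section Sector.
Variables (R : realType) (T : finType) (t : T -> T -> R).
Hypothesis t_sym : forall x y, t x y = t y x.
Variable S : rat.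
Implicit Types (c d : config T) (s : {perm T}).

Lemma hopC : symmetric (hop t).
Proof. by move=> u v; rewrite /hop t_sym. Qed.

Definition in_sector c := valid_config c && (total_spin c == S).

Definition sector_adj c d := [&& valid_config c, valid_config d, total_spin c == S,
                                 total_spin d == S & config_adj t c d].

Local Notation reach := (connect sector_adj).

Lemma reach_sym : symmetric reach.
Proof.
apply: sym_connect_sym => c d; rewrite /sector_adj /config_adj orbC.
by apply/idP/idP => /and5P[-> -> -> -> ->].
Qed.

Lemma in_sector_permc c s : in_sector (permc c s) = in_sector c.
Proof. by rewrite /in_sector valid_config_permc total_spin_permc. Qed.

Definition move_hole c x z : config T :=
  [ffun y => if y == x then c z else if y == z then None else c y].

Lemma move_hole_tperm c x z : c x = None -> move_hole c x z = permc c (tperm x z).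
Proof. by move=> cx; config_ext. Qed.

Definition hole_at c x := in_sector c && (c x == None).

Lemma hole_at_move c x z : hole_at c x -> hole_at (move_hole c x z) z.
Proof.
case/andP=> Sc /eqP cx; rewrite /hole_at move_hole_tperm // in_sector_permc Sc.
by rewrite ffunE tpermR cx.
Qed.

Lemma reach_move_hole c x z : hole_at c x -> hop t x z -> reach c (move_hole c x z).
Proof.
move=> Hc hxz; have [-> | zx] := eqVneq z x.
  by case/andP: Hc => _ /eqP cx; rewrite move_hole_tperm // tperm1 permc1 connect0.
apply: connect1; case/andP: (hole_at_move z Hc) => /andP[vd /eqP sd] _.
case/andP: Hc => /andP[vc /eqP sc] /eqP cx.
rewrite /sector_adj vc vd sc sd eqxx /config_adj; apply/orP; left.
by apply/existsP; exists x; apply/existsP; exists z; rewrite cx eqxx zx hxz /=.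
Qed.

Fixpoint walk_hole c x (p : seq T) : config T :=
  if p is z :: p' then walk_hole (move_hole c x z) z p' else c.

Lemma reach_walk_hole c x p : hole_at c x -> path (hop t) x p -> reach c (walk_hole c x p).
Proof.
elim: p c x => [|z p IH] c x Hc /=; first by rewrite connect0.
case/andP=> hxz Hp; apply: connect_trans (reach_move_hole Hc hxz) _.
exact: IH (hole_at_move z Hc) Hp.
Qed.

Lemma hole_at_permc c s h : hole_at (permc c s) h = hole_at c (s h).
Proof. by rewrite /hole_at in_sector_permc ffunE. Qed.

Lemma hole_at_occupied c h z : hole_at c h -> z != h -> c z != None.
Proof.
case/andP=> /andP[/cards1P[h0 holes] _] /eqP ch; apply: contraNneq => cz.
have : z \in [set y | c y == None] by rewrite inE cz.
have : h \in [set y | c y == None] by rewrite inE ch.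
by rewrite holes !inE => /eqP-> /eqP->.
Qed.

Definition swappable_at x y v := forall c, hole_at c v -> reach c (permc c (tperm x y)).

Lemma swappable_at_hop x y a b : a \in ~: [set x; y] -> b \in ~: [set x; y] ->
  hop t a b -> swappable_at x y b -> swappable_at x y a.
Proof.
rewrite !inE !negb_or => /andP[ax ay] /andP[bx boy] hab swap_b c Hc.
have Hd : hole_at (permc c (tperm x y)) a.
  by rewrite hole_at_permc tpermD // eq_sym.
apply: connect_trans (reach_move_hole Hc hab) _.
apply: connect_trans (swap_b _ (hole_at_move b Hc)) _.
have -> : permc (move_hole c a b) (tperm x y) = move_hole (permc c (tperm x y)) a b.
  by case/andP: Hc => _ /eqP ca; config_ext.
by rewrite reach_sym; apply: reach_move_hole.
Qed.

Lemma swappable_at_connected x y w : hop_connected_on t (~: [set x; y]) ->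
  w \in ~: [set x; y] -> swappable_at x y w ->
  forall v, v \in ~: [set x; y] -> swappable_at x y v.
Proof.
move=> conn w_out swap_w v v_out; case/connectP: (conn v w v_out w_out) => p.
elim: p v v_out => [|z p IH] v v_out /=; first by move=> _ <-.
case/andP=> /and3P[_ z_out hvz] Hp Hlast.
exact: swappable_at_hop v_out z_out hvz (IH z z_out Hp Hlast).
Qed.

Lemma is_loop_rot n (s : seq T) : is_loop t (rot n s) = is_loop t s.
Proof. by rewrite /is_loop rot_uniq rot_cycle. Qed.

Lemma is_loop_rev (s : seq T) : is_loop t (rev s) = is_loop t s.
Proof. by rewrite /is_loop rev_uniq rev_cycle (eq_cycle hopC). Qed.

Lemma swappable_triangle w x y : is_loop t [:: w; x; y] -> swappable_at x y w.
Proof.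
case/andP; rewrite /= !inE => /and3P[/norP[wx wy] xy _] loop_path c Hc.
have -> : permc c (tperm x y) = walk_hole c w [:: x; y; w].
  by case/andP: Hc => _ /eqP cw; config_ext.
exact: reach_walk_hole.
Qed.

Definition rotate3 c a b e : config T :=
  [ffun z => if z == a then c b else if z == b then c e else if z == e then c a else c z].

Lemma rotate3_rotl c a b e : uniq [:: a; b; e] -> rotate3 c a b e = rotate3 c b e a.
Proof. by rewrite /= !inE => /and3P[/norP[ab ae] be _]; config_ext. Qed.

Lemma reach_rotate3 h a b e c : is_loop t [:: h; a; b; e] -> hole_at c h ->
  reach c (rotate3 c a b e) /\ reach c (rotate3 c e b a).
Proof.
move=> loop Hc; case/andP: (Hc) => _ /eqP ch.
have rev_loop : is_loop t [:: h; e; b; a].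
  by rewrite -(is_loop_rot 1) -is_loop_rev.
case/andP: rev_loop; case/andP: loop.
rewrite /= !inE => /and4P[/norP[ha /norP[hb he]] /norP[ab ae] be _] fwd _ bwd.
split.
  have -> : rotate3 c a b e = walk_hole c h [:: a; b; e; h] by config_ext.
  exact: reach_walk_hole.
have -> : rotate3 c e b a = walk_hole c h [:: e; b; a; h] by config_ext.
exact: reach_walk_hole.
Qed.

Lemma tperm_rotate3 c p q r : uniq [:: p; q; r] ->
  c p != None -> c q != None -> c r != None ->
  [\/ permc c (tperm p q) = c, permc c (tperm p q) = rotate3 c p q r
     | permc c (tperm p q) = rotate3 c r q p].
Proof.
rewrite /= !inE => /and3P[/norP[pq pr] qr _].
case Ep: (c p) => [bp|] // _; case Eq: (c q) => [bq|] // _; case Er: (c r) => [br|] // _.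
by case: bp bq br Ep Eq Er => [] [] [] Ep Eq Er;
  first [ apply: Or31; config_ext | apply: Or32; config_ext | apply: Or33; config_ext ].
Qed.

Lemma swappable_square u v x y : is_loop t [:: u; v; x; y] -> swappable_at x y u.
Proof.
move=> loop c Hc; have [fwd bwd] := reach_rotate3 loop Hc.
have := loop; rewrite /is_loop /= !inE => /andP[/and4P[/norP[uv /norP[ux uy]] /norP[vx vy] xy _] _].
have occ z : z != u -> c z != None by apply: hole_at_occupied Hc.
have [->|->|->] := @tperm_rotate3 c x y v ltac:(distinct_sites)
  (occ x ltac:(distinct_sites)) (occ y ltac:(distinct_sites)) (occ v ltac:(distinct_sites)).
- exact: connect0.
- by rewrite -rotate3_rotl //; distinct_sites.
- by rewrite rotate3_rotl //; distinct_sites.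
Qed.

Lemma swappable_square_diagonal u v x y : is_loop t [:: u; x; v; y] -> swappable_at x y u.
Proof.
move=> loop c Hc; have [fwd bwd] := reach_rotate3 loop Hc.
have := loop; rewrite /is_loop /= !inE => /andP[/and4P[/norP[ux /norP[uv uy]] /norP[xv xy] vy _] _].
have occ z : z != u -> c z != None by apply: hole_at_occupied Hc.
have [->|->|->] := @tperm_rotate3 c x y v ltac:(distinct_sites)
  (occ x ltac:(distinct_sites)) (occ y ltac:(distinct_sites)) (occ v ltac:(distinct_sites)).
- exact: connect0.
- by rewrite rotate3_rotl //; distinct_sites.
- by rewrite -rotate3_rotl //; distinct_sites.
Qed.

Lemma swappable_at_endpoint x y : (forall v, v \in ~: [set x; y] -> swappable_at x y v) ->
  hop t x y \/ (exists2 w, w \in ~: [set x; y] & hop t x w && hop t w y) ->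
  swappable_at x y x.
Proof.
move=> swap_out [hxy | [w w_out /andP[hxw hwy]]] c Hc; case/andP: (Hc) => _ /eqP cx.
  by rewrite -move_hole_tperm //; apply: reach_move_hole.
move: (w_out); rewrite !inE negb_or => /andP[wx wy].
have Hw := hole_at_move w Hc.
have Hw' : hole_at (permc (move_hole c x w) (tperm x y)) w.
  by rewrite hole_at_permc tpermD // eq_sym.
apply: connect_trans (reach_move_hole Hc hxw) _.
apply: connect_trans (swap_out w w_out _ Hw) _.
have -> : permc c (tperm x y) = move_hole (permc (move_hole c x w) (tperm x y)) w y.
  by config_ext.
exact: reach_move_hole.
Qed.

Lemma short_loop_shapes x y : x != y -> common_short_loop t x y ->
  exists u v, [\/ is_loop t [:: u; x; y], is_loop t [:: u; v; x; y] | is_loop t [:: u; x; v; y]].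
Proof.
move=> xy.
suff shapes (s : seq T) : is_loop t s -> x \in s -> y \in s -> size s \in [:: 3; 4] ->
    exists u v, [\/ is_loop t [:: u; x; y], is_loop t [:: u; v; x; y] | is_loop t [:: u; x; v; y]].
  by case/orP=> /existsP[s /and3P[loop xs ys]]; apply: shapes loop xs ys _; rewrite size_tuple.
move=> loop xs /rot_to[i s' rot_s] size_s.
rewrite -(is_loop_rot i) rot_s in loop; rewrite -(size_rot i) rot_s in size_s.
rewrite -(mem_rot i) rot_s inE (negbTE xy) /= in xs.
case: s' {rot_s} loop xs size_s => [|a [|b [|e [|? ?]]]] // loop; rewrite !inE.
- case/orP=> /eqP-> _.
  + by exists b, b; apply: Or31; rewrite -is_loop_rev.
  + by exists a, a; apply: Or31; rewrite -(is_loop_rot 2).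
- case/or3P=> /eqP-> _.
  + by exists e, b; apply: Or32; rewrite -is_loop_rev.
  + by exists a, e; apply: Or33; rewrite -(is_loop_rot 3).
  + by exists a, b; apply: Or32; rewrite -(is_loop_rot 3).
Qed.

Lemma short_loop_swappable u v x y :
  [\/ is_loop t [:: u; x; y], is_loop t [:: u; v; x; y] | is_loop t [:: u; x; v; y]] ->
  [/\ u \in ~: [set x; y], swappable_at x y u
     & hop t x y \/ exists2 w, w \in ~: [set x; y] & hop t x w && hop t w y].
Proof.
case=> loop; case/andP: (loop) => /= dist loop_path; rewrite !inE in dist.
- move/and3P: dist loop_path => [/norP[ux uy] _ _] /and4P[_ hxy _ _].
  by split; [rewrite !inE negb_or ux uy | exact: swappable_triangle loop | left].
- move/and4P: dist loop_path => [/norP[_ /norP[ux uy]] _ _ _] /and5P[_ _ hxy _ _].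
  by split; [rewrite !inE negb_or ux uy | exact: swappable_square loop | left].
- move/and4P: dist loop_path => [/norP[ux /norP[_ uy]] /norP[xv _] vy _] /and5P[_ hxv hvy _ _].
  split; [rewrite !inE negb_or ux uy // | exact: swappable_square_diagonal loop | right].
  by exists v; rewrite ?hxv ?hvy // !inE negb_or [v == x]eq_sym xv vy.
Qed.

Lemma exchange_bond_sym x y : exchange_bond t x y -> exchange_bond t y x.
Proof.
case=> xy loop conn; split; rewrite 1?eq_sym 1?setUC //.
by case/orP: loop => /existsP[s /and3P[loop xs ys]]; apply/orP; [left|right];
  apply/existsP; exists s; rewrite loop xs ys.
Qed.

Lemma swappable_of_exchange_bond x y h : exchange_bond t x y -> h != y -> swappable_at x y h.
Proof.
case=> xy /(short_loop_shapes xy)[u [v /short_loop_swappable[u_out swap_u link]]] conn hy.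
have swap_out := swappable_at_connected conn u_out swap_u.
have [-> | hx] := eqVneq h x; first exact: swappable_at_endpoint.
by apply: swap_out; rewrite !inE negb_or hx.
Qed.

Lemma reach_tperm_exchange_bond x y c : exchange_bond t x y -> in_sector c ->
  reach c (permc c (tperm x y)).
Proof.
move=> bond Sc; have [h Hh] : exists h, hole_at c h.
  case/andP: (Sc) => /cards1P[h holes] _; exists h; rewrite /hole_at Sc /=.
  by have := set11 h; rewrite -holes inE.
case: (eqVneq h y) Hh => [-> | hy] Hh; last exact: swappable_of_exchange_bond bond hy c Hh.
have [xy _ _] := bond; rewrite tpermC.
have yx : y != x by rewrite eq_sym.
exact: swappable_of_exchange_bond (exchange_bond_sym bond) yx c Hh.
Qed.

Definition reachable_perm s := forall c, in_sector c -> reach c (permc c s).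

Lemma reachable_perm1 : reachable_perm 1%g.
Proof. by move=> c _; rewrite permc1 connect0. Qed.

Lemma reachable_permM s u : reachable_perm s -> reachable_perm u -> reachable_perm (u * s)%g.
Proof.
move=> rs ru c Sc; rewrite -permcM; apply: connect_trans (rs c Sc) (ru _ _).
by rewrite in_sector_permc.
Qed.

Lemma reachable_tperm : lattice_connected_by_exchange_bonds t ->
  forall x y, reachable_perm (tperm x y).
Proof.
move=> L x y; elim: (L x y) => {x y} [x y /reach_tperm_exchange_bond // | x | x y z _ rxy _ ryz].
  by rewrite tperm1; apply: reachable_perm1.
have [<- // | yz] := eqVneq y z.
have [<- | xz] := eqVneq x z; first by rewrite tperm1; apply: reachable_perm1.
rewrite -(tpermJ_tperm yz xz) conjgE tpermV tpermC.
by apply: reachable_permM (reachable_permM rxy ryz) rxy.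
Qed.

Lemma reachable_perm_all : lattice_connected_by_exchange_bonds t -> forall s, reachable_perm s.
Proof.
move=> L s; have [ts -> _] := prod_tpermP s.
apply: big_ind => [|u w ru rw|[a b] _]; first exact: reachable_perm1.
  exact: reachable_permM rw ru.
exact: reachable_tperm.
Qed.

End Sector.

Theorem mainTheorem6 (R : realType) (T : finType) (t : T -> T -> R)
  (t_sym : forall x y, t x y = t y x) :
  lattice_connected_by_exchange_bonds t -> connectivity_condition t.
Proof.
move=> bonds S c c' vc vc' sc sc'.
have [s ->] := permc_of_nsites_eq (nsites_eq_of_spin vc vc' (etrans sc (esym sc'))).
by apply: (reachable_perm_all t_sym bonds); rewrite /in_sector vc sc eqxx.
Qed.
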